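(* Under Rayleigh fading ($m_{\rm rd}=m_{\rm sd}=1$), for every $r>0$, $P_{\rm r}>0$ and $\mathcal C_x\in[0,1)$, \[ \mathcal P_{\rm rd}(P_{\rm r},\mathcal C_x)=1-\frac{\exp\!\left(-\frac{\Psi_r(\mathcal C_x)}{P_{\rm r}\pi_{\rm rd}(1-\mathcal C_x^2)}\right)}{P_{\rm s}\pi_{\rm sd}\frac{\Psi_r(\mathcal C_x)}{P_{\rm r}\pi_{\rm rd}(1-\mathcal C_x^2)}+1}. \] In particular, for $\mathcal C_x=0$ this equals $1-\frac{P_{\rm r}\pi_{\rm rd}e^{-\eta/(P_{\rm r}\pi_{\rm rd})}}{P_{\rm r}\pi_{\rm rd}+P_{\rm s}\pi_{\rm sd}\eta}$, and as $\mathcal C_x\to1$ it tends to $1-\frac{e^{-\gamma/(2P_{\rm r}\pi_{\rm rd})}}{\frac{\gamma P_{\rm s}\pi_{\rm sd}}{2P_{\rm r}\pi_{\rm rd}}+1}$.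
   Context: Let $P_{\rm s}>0$, $P_{\rm r}>0$. Rayleigh fading: $g_{\rm rd},g_{\rm sd}$ are independent exponential random variables with means $\pi_{\rm rd},\pi_{\rm sd}>0$. For $\mathcal C_x\in[0,1)$ define $R_{\rm rd}(P_{\rm r},\mathcal C_x)=\tfrac12\log_2\frac{(P_{\rm r}g_{\rm rd}+P_{\rm s}g_{\rm sd}+1)^2-(P_{\rm r}g_{\rm rd}\mathcal C_x)^2}{(P_{\rm s}g_{\rm sd}+1)^2}$. For a target rate $r>0$ put $\gamma=2^{2r}-1$, $\eta=2^r-1$ and $\Psi_r(x)=\sqrt{1+\gamma(1-x^2)}-1$. The R–D outage probability is $\mathcal P_{\rm rd}=\mathbb P\{R_{\rm rd}<r\}$. *)

From Stdlib Require Import Reals Lra.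
Open Scope R_scope.

Definition log2 (z : R) : R := ln z / ln 2.

Definition R_rd (Ps Pr Cx grd gsd : R) : R :=
  / 2 * log2 (((Pr * grd + Ps * gsd + 1) ^ 2 - (Pr * grd * Cx) ^ 2)
              / (Ps * gsd + 1) ^ 2).

Definition gam (r : R) : R := Rpower 2 (2 * r) - 1.
Definition eta (r : R) : R := Rpower 2 r - 1.
Definition Psi (r x : R) : R := sqrt (1 + gam r * (1 - x ^ 2)) - 1.

Definition exp_pdf (mu x : R) : R := / mu * exp (- x / mu).

Definition IntegralIs (f : R -> R) (a b v : R) : Prop :=
  exists pr : Riemann_integrable f a b, RiemannInt pr = v.

Definition ImproperInt0 (f : R -> R) (l : R) : Prop :=
  forall eps, 0 < eps -> exists B, forall b, B <= b ->
    exists v, IntegralIs f 0 b v /\ Rabs (v - l) < eps.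

Definition indic {P : Prop} (d : {P} + {~ P}) : R := if d then 1 else 0.

(* P{ R_rd < r } = p, where g_rd ~ Exp(mean pird), g_sd ~ Exp(mean pisd)
   independent: the probability is the iterated integral of the joint
   density times the indicator of the outage event. *)
Definition outage_prob_is (Ps Pr Cx pird pisd r p : R) : Prop :=
  exists h : R -> R,
    (forall y, 0 <= y ->
       ImproperInt0
         (fun x => exp_pdf pird x * exp_pdf pisd y *
                   indic (Rlt_dec (R_rd Ps Pr Cx x y) r)) (h y)) /\
    ImproperInt0 h p.

Definition Prd_formula (Ps Pr Cx pird pisd r : R) : R :=
  let t := Psi r Cx / (Pr * pird * (1 - Cx ^ 2)) in
  1 - exp (- t) / (Ps * pisd * t + 1).

From Coquelicot Require Import Coquelicot.
From Stdlib Require Import Reals Lra Psatz.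
Open Scope R_scope.

(** Solving the quadratic inequality hidden in [R_rd < r] shows that, for a
    fixed S-D gain [y], the R-D gain is in outage exactly on the interval
    [x < (Ps y + 1) k] with [k = Psi r Cx / (Pr (1 - Cx^2))].  Integrating the
    exponential density of [g_rd] over this interval gives
    [1 - exp (-(Ps y + 1) k / pird)], and averaging over the exponential [g_sd]
    leaves a difference of two exponentials whose integral is the closed form.
    Rationalizing [Psi r Cx / (1 - Cx^2)] removes the singularity at [Cx = 1],
    which yields the limit. *)

Lemma IntegralIs_is_RInt f a b v : is_RInt f a b v -> IntegralIs f a b v.
Proof.
  intros H. exists (ex_RInt_Reals_0 f a b (ex_intro _ v H)).
  rewrite <- RInt_Reals. now apply is_RInt_unique.
Qed.

Lemma ImproperInt0_of_is_lim (f v : R -> R) (l : R) :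
  (forall b, 0 <= b -> is_RInt f 0 b (v b)) -> is_lim v p_infty l ->
  ImproperInt0 f l.
Proof.
  intros Hint Hlim eps Heps.
  apply is_lim_spec in Hlim. unfold is_lim' in Hlim.
  destruct (Hlim (mkposreal eps Heps)) as [M HM].
  exists (Rmax 0 M + 1). intros b Hb.
  assert (H0M := Rmax_l 0 M). assert (HMM := Rmax_r 0 M).
  exists (v b). split.
  - apply IntegralIs_is_RInt, Hint. lra.
  - apply HM. lra.
Qed.

Lemma is_RInt_exp_decay A mu a b : 0 < mu ->
  is_RInt (fun x => A * exp (- x / mu)) a b
    (A * mu * (exp (- a / mu) - exp (- b / mu))).
Proof.
  intros Hmu.
  assert (H := @is_RInt_derive R_CompleteNormedModule
    (fun x => - (A * mu) * exp (- x / mu)) (fun x => A * exp (- x / mu)) a b).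
  replace (A * mu * (exp (- a / mu) - exp (- b / mu)))
    with (minus (- (A * mu) * exp (- b / mu)) (- (A * mu) * exp (- a / mu)))
    by (unfold minus, plus, opp; simpl; ring).
  apply H.
  - intros x _. auto_derive; [easy|]. unfold Rdiv. field. lra.
  - intros x _. apply (@ex_derive_continuous R_AbsRing R_NormedModule).
    auto_derive. easy.
Qed.

Lemma is_lim_exp_decay mu : 0 < mu -> is_lim (fun b => exp (- b / mu)) p_infty 0.
Proof.
  intros Hmu.
  assert (Hinv : 0 < / mu) by (apply Rinv_0_lt_compat; lra).
  apply is_lim_ext with (fun b => exp (- / mu * b + 0)).
  { intros b. f_equal. unfold Rdiv. ring. }
  apply is_lim_comp_lin; [|lra].
  replace (Rbar_plus (Rbar_mult (- / mu) p_infty) 0) with m_infty.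
  { exact is_lim_exp_m. }
  simpl. destruct (Rle_dec 0 (- / mu)) as [Hle|_]; [exfalso; lra|reflexivity].
Qed.

Lemma ImproperInt0_truncated_exp A mu c g : 0 < mu -> 0 <= c ->
  (forall x, 0 < x < c -> g x = A * exp (- x / mu)) ->
  (forall x, c < x -> g x = 0) ->
  ImproperInt0 g (A * mu * (1 - exp (- c / mu))).
Proof.
  intros Hmu Hc Hbelow Habove eps Heps.
  exists c. intros b Hb. exists (A * mu * (1 - exp (- c / mu))).
  split; [|rewrite Rminus_diag, Rabs_R0; exact Heps].
  apply IntegralIs_is_RInt.
  replace (A * mu * (1 - exp (- c / mu)))
    with (plus (A * mu * (exp (- 0 / mu) - exp (- c / mu))) (scal (b - c) 0)).
  2:{ unfold plus, scal; simpl; unfold mult; simpl.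
      replace (- 0 / mu) with 0 by (field; lra). rewrite exp_0. ring. }
  apply (@is_RInt_Chasles R_NormedModule) with c.
  - apply is_RInt_ext with (fun x => A * exp (- x / mu)); [|now apply is_RInt_exp_decay].
    intros x Hx. rewrite Rmin_left, Rmax_right in Hx by lra.
    symmetry; apply Hbelow; lra.
  - apply is_RInt_ext with (fun _ => 0); [|apply (@is_RInt_const R_NormedModule)].
    intros x Hx. rewrite Rmin_left, Rmax_right in Hx by lra.
    symmetry; apply Habove; lra.
Qed.

Lemma ImproperInt0_exp_difference A mu B nu f : 0 < mu -> 0 < nu ->
  (forall x, f x = A * exp (- x / mu) - B * exp (- x / nu)) ->
  ImproperInt0 f (A * mu - B * nu).
Proof.
  intros Hmu Hnu Hf.
  apply ImproperInt0_of_is_lim with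
    (fun b => A * mu * (1 - exp (- b / mu)) - B * nu * (1 - exp (- b / nu))).
  - intros b _.
    assert (Hexp0 : forall m, 0 < m -> exp (- 0 / m) = 1).
    { intros m Hm. replace (- 0 / m) with 0 by (field; lra). apply exp_0. }
    replace (A * mu * (1 - exp (- b / mu)) - B * nu * (1 - exp (- b / nu)))
      with (minus (A * mu * (exp (- 0 / mu) - exp (- b / mu)))
                  (B * nu * (exp (- 0 / nu) - exp (- b / nu))))
      by (rewrite (Hexp0 mu Hmu), (Hexp0 nu Hnu); reflexivity).
    apply is_RInt_ext with
      (fun x => minus (A * exp (- x / mu)) (B * exp (- x / nu))).
    { intros x _. rewrite Hf. reflexivity. }
    apply (@is_RInt_minus R_NormedModule); now apply is_RInt_exp_decay.
  - assert (Hlim : forall m C, 0 < m ->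
      is_lim (fun b => C * m * (1 - exp (- b / m))) p_infty (C * m)).
    { intros m C Hm.
      replace (Finite (C * m)) with (Rbar_mult (C * m) (1 - 0))
        by (simpl; f_equal; ring).
      apply is_lim_scal_l, is_lim_minus';
        [apply is_lim_const|now apply is_lim_exp_decay]. }
    apply is_lim_minus'; auto.
Qed.

Lemma gam_pos r : 0 < r -> 0 < gam r.
Proof.
  intros Hr. unfold gam.
  assert (H : Rpower 2 0 < Rpower 2 (2 * r)) by (apply Rpower_lt; lra).
  rewrite Rpower_O in H; lra.
Qed.

Lemma half_log2_lt_iff z r : 0 < z -> (/ 2 * log2 z < r <-> z < 1 + gam r).
Proof.
  intros Hz.
  assert (Hln2 : 0 < ln 2) by (rewrite <- ln_1; apply ln_increasing; lra).
  assert (Hgam : ln (1 + gam r) = 2 * r * ln 2).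
  { unfold gam, Rpower. rewrite Rplus_minus. apply ln_exp. }
  assert (Hexp : 0 < 1 + gam r) by (unfold gam, Rpower; pose proof (exp_pos (2 * r * ln 2)); lra).
  unfold log2. transitivity (ln z < ln (1 + gam r)).
  - rewrite Hgam. split; intros H.
    + apply Rmult_lt_compat_r with (r := 2 * ln 2) in H; [|lra].
      replace (/ 2 * (ln z / ln 2) * (2 * ln 2)) with (ln z) in H by (field; lra).
      lra.
    + apply Rmult_lt_reg_r with (2 * ln 2); [lra|].
      replace (/ 2 * (ln z / ln 2) * (2 * ln 2)) with (ln z) by (field; lra).
      lra.
  - split; [now apply ln_lt_inv|now apply ln_increasing].
Qed.

Lemma Psi_pos r C : 0 < r -> 0 <= C < 1 -> 0 < Psi r C.
Proof.
  intros Hr HC. assert (Hg := gam_pos r Hr). unfold Psi.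
  assert (Hs : 0 < gam r * (1 - C ^ 2)) by (apply Rmult_lt_0_compat; nra).
  assert (H : sqrt 1 < sqrt (1 + gam r * (1 - C ^ 2))) by (apply sqrt_lt_1; lra).
  rewrite sqrt_1 in H. lra.
Qed.

Lemma Psi_0 r : Psi r 0 = eta r.
Proof.
  unfold Psi, eta, gam.
  replace (1 + (Rpower 2 (2 * r) - 1) * (1 - 0 ^ 2)) with (Rpower 2 r * Rpower 2 r).
  - rewrite sqrt_square; [reflexivity|]. left; apply exp_pos.
  - rewrite <- Rpower_plus. replace (r + r) with (2 * r) by ring. ring.
Qed.

Lemma Psi_div_rationalized r C : 0 < r -> 0 <= C < 1 ->
  Psi r C / (1 - C ^ 2) = gam r / (sqrt (1 + gam r * (1 - C ^ 2)) + 1).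
Proof.
  intros Hr HC. assert (Hg := gam_pos r Hr). unfold Psi.
  assert (Hs : 0 < 1 - C ^ 2) by nra.
  set (s := 1 - C ^ 2) in *.
  assert (HS2 : sqrt (1 + gam r * s) * sqrt (1 + gam r * s) = 1 + gam r * s)
    by (apply sqrt_sqrt; nra).
  assert (HS0 := sqrt_pos (1 + gam r * s)).
  set (S := sqrt (1 + gam r * s)) in *.
  replace (gam r) with ((S * S - 1) / s) by (rewrite HS2; field; lra).
  field. lra.
Qed.

Lemma quadratic_lt_iff g s m a : 0 < g -> 0 < s -> 0 < m -> 0 <= a ->
  ((a + m) ^ 2 - (1 - s) * a ^ 2 < (1 + g) * m ^ 2 <->
   a < m * ((sqrt (1 + g * s) - 1) / s)).
Proof.
  intros Hg Hs Hm Ha.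
  assert (HS2 : sqrt (1 + g * s) * sqrt (1 + g * s) = 1 + g * s)
    by (apply sqrt_sqrt; nra).
  assert (HS1 : sqrt 1 < sqrt (1 + g * s)) by (apply sqrt_lt_1; nra).
  rewrite sqrt_1 in HS1.
  set (S := sqrt (1 + g * s)) in *.
  (* [s] times the difference of the two sides factors over the roots in [a]. *)
  assert (Hfactor : s * ((a + m) ^ 2 - (1 - s) * a ^ 2 - (1 + g) * m ^ 2)
                    = (s * a + m - S * m) * (s * a + m + S * m)).
  { transitivity ((s * a + m) ^ 2 - (S * S) * m ^ 2); [rewrite HS2|]; ring. }
  assert (Hpos : 0 < s * a + m + S * m) by nra.
  replace (m * ((S - 1) / s)) with ((S - 1) * m / s) by (field; lra).
  rewrite <- Rlt_div_r by lra.
  split; intros H; nra.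
Qed.

Lemma R_rd_lt_iff Ps Pr C r x y :
  0 <= Ps -> 0 < Pr -> 0 < r -> 0 <= C < 1 -> 0 <= x -> 0 <= y ->
  (R_rd Ps Pr C x y < r <-> x < (Ps * y + 1) * (Psi r C / (Pr * (1 - C ^ 2)))).
Proof.
  intros HPs HPr Hr HC Hx Hy.
  assert (Hs : 0 < 1 - C ^ 2) by nra.
  set (m := Ps * y + 1). set (a := Pr * x).
  assert (Hm : 0 < m) by (unfold m; nra).
  assert (Ha : 0 <= a) by (unfold a; nra).
  assert (HN : (Pr * x + Ps * y + 1) ^ 2 - (Pr * x * C) ^ 2
               = (a + m) ^ 2 - (1 - (1 - C ^ 2)) * a ^ 2) by (unfold a, m; ring).
  assert (HNpos : 0 < (a + m) ^ 2 - (1 - (1 - C ^ 2)) * a ^ 2).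
  { replace ((a + m) ^ 2 - (1 - (1 - C ^ 2)) * a ^ 2)
      with ((a * (1 - C) + m) * (a * (1 + C) + m)) by ring.
    apply Rmult_lt_0_compat; nra. }
  unfold R_rd. fold m. rewrite HN.
  rewrite half_log2_lt_iff by (apply Rdiv_lt_0_compat; nra).
  rewrite Rlt_div_l by nra.
  rewrite quadratic_lt_iff by (auto using gam_pos).
  unfold a, Psi.
  replace (m * ((sqrt (1 + gam r * (1 - C ^ 2)) - 1) / (1 - C ^ 2)))
    with (Pr * (m * ((sqrt (1 + gam r * (1 - C ^ 2)) - 1) / (Pr * (1 - C ^ 2)))))
    by (field; lra).
  split; intros H; nra.
Qed.

Lemma outage_prob_is_Prd_formula Ps Pr pird pisd r C :
  0 <= Ps -> 0 < Pr -> 0 < pird -> 0 < pisd -> 0 < r -> 0 <= C < 1 ->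
  outage_prob_is Ps Pr C pird pisd r (Prd_formula Ps Pr C pird pisd r).
Proof.
  intros HPs HPr Hpird Hpisd Hr HC.
  assert (Hs : 0 < 1 - C ^ 2) by nra.
  set (t := Psi r C / (Pr * pird * (1 - C ^ 2))).
  assert (Ht : 0 < t).
  { apply Rdiv_lt_0_compat; [now apply Psi_pos|]. apply Rmult_lt_0_compat; nra. }
  set (c := fun y => (Ps * y + 1) * (t * pird)).
  assert (Hc : forall y, c y = (Ps * y + 1) * (Psi r C / (Pr * (1 - C ^ 2)))).
  { intros y. unfold c, t. field. lra. }
  exists (fun y => / pird * exp_pdf pisd y * pird * (1 - exp (- c y / pird))).
  split.
  - intros y Hy.
    assert (Hcy : 0 <= c y) by (unfold c; apply Rmult_le_pos; nra).
    apply ImproperInt0_truncated_exp; auto.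
    + intros x Hx. destruct (Rlt_dec (R_rd Ps Pr C x y) r) as [H|H]; simpl.
      * unfold exp_pdf. ring.
      * exfalso. apply H. apply R_rd_lt_iff; try lra. now rewrite <- Hc.
    + intros x Hx. destruct (Rlt_dec (R_rd Ps Pr C x y) r) as [H|H]; simpl; [|ring].
      exfalso. apply R_rd_lt_iff in H; try lra. rewrite <- Hc in H. lra.
  - (* The two exponentials merge into one with rate [/ pisd + Ps * t]. *)
    assert (Hlam : 0 < / pisd + Ps * t)
      by (assert (0 < / pisd) by (apply Rinv_0_lt_compat; lra); nra).
    assert (HPst : 0 <= Ps * pisd * t) by (apply Rmult_le_pos; nra).
    unfold Prd_formula. cbv zeta. fold t.
    replace (1 - exp (- t) / (Ps * pisd * t + 1))
      with (/ pisd * pisd - / pisd * exp (- t) * / (/ pisd + Ps * t))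
      by (field; split; lra).
    apply ImproperInt0_exp_difference; [lra|now apply Rinv_0_lt_compat|].
    intros y. unfold exp_pdf.
    replace (- y / / (/ pisd + Ps * t)) with (- y / pisd + - (Ps * t * y))
      by (field; lra).
    replace (- c y / pird) with (- t + - (Ps * t * y)) by (unfold c; field; lra).
    rewrite !exp_plus. field. lra.
Qed.

Lemma Prd_formula_0 Ps Pr pird pisd r :
  0 <= Ps -> 0 < Pr -> 0 < pird -> 0 < pisd -> 0 < r ->
  Prd_formula Ps Pr 0 pird pisd r
  = 1 - Pr * pird * exp (- eta r / (Pr * pird)) / (Pr * pird + Ps * pisd * eta r).
Proof.
  intros HPs HPr Hpird Hpisd Hr.
  assert (He : 0 < eta r) by (rewrite <- Psi_0; apply Psi_pos; lra).
  assert (HPrd : 0 < Pr * pird) by nra.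
  assert (HPse : 0 <= Ps * pisd * eta r) by (apply Rmult_le_pos; nra).
  unfold Prd_formula. cbv zeta. rewrite Psi_0.
  replace (- (eta r / (Pr * pird * (1 - 0 ^ 2)))) with (- eta r / (Pr * pird))
    by (field; lra).
  field. repeat split; nra.
Qed.

Lemma Prd_formula_limit_1 Ps Pr pird pisd r :
  0 <= Ps -> 0 < Pr -> 0 < pird -> 0 < pisd -> 0 < r ->
  limit1_in (fun C => Prd_formula Ps Pr C pird pisd r) (fun C => 0 <= C < 1)
    (1 - exp (- gam r / (2 * Pr * pird)) / (gam r * Ps * pisd / (2 * Pr * pird) + 1)) 1.
Proof.
  intros HPs HPr Hpird Hpisd Hr.
  assert (Hg := gam_pos r Hr).
  set (T := fun C => gam r / ((sqrt (1 + gam r * (1 - C ^ 2)) + 1) * (Pr * pird))).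
  set (G := fun C => 1 - exp (- T C) / (Ps * pisd * T C + 1)).
  assert (HG1 : G 1 = 1 - exp (- gam r / (2 * Pr * pird))
                          / (gam r * Ps * pisd / (2 * Pr * pird) + 1)).
  { unfold G, T. replace (1 + gam r * (1 - 1 ^ 2)) with 1 by ring. rewrite sqrt_1.
    f_equal. f_equal; [f_equal|]; field; lra. }
  assert (HGcont : continuity_pt G 1).
  { apply continuity_pt_filterlim, (@ex_derive_continuous R_AbsRing R_NormedModule).
    unfold G, T. auto_derive.
    replace (1 + gam r * (1 + - (1 * (1 * 1)))) with 1 by ring. rewrite sqrt_1.
    assert (HT1 : 0 < gam r * / ((1 + 1) * (Pr * pird)))
      by (apply Rmult_lt_0_compat; [lra|apply Rinv_0_lt_compat; nra]).
    assert (0 <= Ps * pisd * (gam r * / ((1 + 1) * (Pr * pird))))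
      by (apply Rmult_le_pos; [apply Rmult_le_pos|]; lra).
    repeat split; nra. }
  rewrite <- HG1.
  apply limit1_ext with G.
  { intros C HC.
    assert (HT : T C = Psi r C / (Pr * pird * (1 - C ^ 2))).
    { assert (HS := sqrt_pos (1 + gam r * (1 - C ^ 2))).
      replace (Psi r C / (Pr * pird * (1 - C ^ 2)))
        with (Psi r C / (1 - C ^ 2) / (Pr * pird)) by (field; split; nra).
      rewrite Psi_div_rationalized by assumption.
      unfold T. field. split; nra. }
    unfold G, Prd_formula. cbv zeta. now rewrite HT. }
  apply limit1_imp with (D_x no_cond 1); [|exact HGcont].
  intros C HC. split; [exact I|lra].
Qed.

Theorem corollary1 (Ps Pr pird pisd r : R) :
  0 < Ps -> 0 < Pr -> 0 < pird -> 0 < pisd -> 0 < r ->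
  (forall Cx, 0 <= Cx < 1 ->
     outage_prob_is Ps Pr Cx pird pisd r (Prd_formula Ps Pr Cx pird pisd r)) /\
  outage_prob_is Ps Pr 0 pird pisd r
    (1 - Pr * pird * exp (- eta r / (Pr * pird)) / (Pr * pird + Ps * pisd * eta r)) /\
  limit1_in (fun Cx => Prd_formula Ps Pr Cx pird pisd r) (fun Cx => 0 <= Cx < 1)
    (1 - exp (- gam r / (2 * Pr * pird)) / (gam r * Ps * pisd / (2 * Pr * pird) + 1)) 1.
Proof.
  intros HPs HPr Hpird Hpisd Hr.
  split; [|split].
  - intros Cx HCx. apply outage_prob_is_Prd_formula; auto; lra.
  - rewrite <- Prd_formula_0 by (auto; lra).
    apply outage_prob_is_Prd_formula; auto; lra.
  - apply Prd_formula_limit_1; auto; lra.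
Qed.
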